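(* For distinct $a,b,c,d$, in $A(\mathcal{H}^+)$: (i) $\mathcal{M}_{ab}*\bar{\mathcal{M}}_{cd}=0$ and $\bar{\mathcal{M}}_{cd}*\mathcal{M}_{ab}=0$; (ii) $[\Lambda_{ab}]*[\Lambda_{cd}]=[S_{ab}]*[S_{cd}]$.
   Context: $\mathfrak{h}$ is an $\ell$-dimensional complex space with orthonormal basis $h_1,\dots,h_\ell$; $\mathcal{H}=M(1,0)$ the free bosonic vertex operator algebra generated by Heisenberg modes $h(n)$ on vacuum $\mathbf{1}$; $\mathcal{H}^+$ the fixed points of the automorphism induced by $h\mapsto-h$; $A(\mathcal{H}^+)=\mathcal{H}^+/O(\mathcal{H}^+)$ Zhu's algebra ($O$ spanned by $u\circ v=\sum_{i\ge0}\binom{\mathrm{wt}\,u}{i}u_{i-2}v$, product induced by $u*v=\sum_{i\ge0}\binom{\mathrm{wt}\,u}{i}u_{i-1}v$), $[u]=u+O(\mathcal{H}^+)$. For distinct $x,y$: $S_{xy}(1,m)=h_x(-1)h_y(-m)\mathbf{1}$, $S_{xy}=S_{xy}(1,1)$, $E^u_{xy}=5S_{xy}(1,2)+25S_{xy}(1,3)+36S_{xy}(1,4)+16S_{xy}(1,5)$, $E^t_{xy}=-16\big(3S_{xy}(1,2)+14S_{xy}(1,3)+19S_{xy}(1,4)+8S_{xy}(1,5)\big)$, $\Lambda_{xy}=45S_{xy}(1,2)+190S_{xy}(1,3)+240S_{xy}(1,4)+96S_{xy}(1,5)$. $\mathcal{M}_{xy}$ is the span of $[E^u_{xy}],[E^u_{yx}],[E^t_{xy}],[E^t_{yx}]$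 and $\bar{\mathcal{M}}_{xy}=\mathcal{M}_{xy}+\mathbb{C}[\Lambda_{xy}]$. *)

(* Heisenberg VOA M(1,0) of rank l over C = R[i]
   (R = Stdlib reals, complex numbers from mathcomp-real-closed),
   realised as the polynomial algebra {malg C[{cmonom Var}]} in the
   variables x_(i,n) <-> h_i(-(n+1)), i : 'I_l, n : nat. *)
From HB Require Import structures.
From mathcomp Require Import all_boot all_order all_algebra.
From mathcomp Require Import reals Rstruct complex.
From mathcomp Require Import finmap.
From mathcomp.multinomials Require Import monalg.

Set Implicit Arguments.
Unset Strict Implicit.
Unset Printing Implicit Defensive.

Import Order.TTheory GRing.Theory Num.Theory.
Local Open Scope ring_scope.

Definition C : numClosedFieldType := complex Rdefinitions.R.

Section Heisenberg.
Variable l : nat.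

(* variable (i, n) stands for the creation mode h_i(-(n+1)) *)
Definition Var : choiceType := ('I_l * nat)%type.
Definition Mon : choiceType := cmonom Var.
Definition Fock := {malg C[Mon]}.

Definition vars (m : Mon) : seq Var :=
  flatten [seq nseq (m j) j | j <- finsupp (cmonom_val m)].

Definition wtl (s : seq Var) : nat := sumn [seq j.2.+1 | j <- s].
Definition wtm (m : Mon) : nat := wtl (vars m).
Definition wtmax (v : Fock) : nat := \max_(m <- msupp v) wtm m.

Definition xmul (j : Var) (v : Fock) : Fock := << ucm j >> * v.
Definition xder (j : Var) (v : Fock) : Fock :=
  \sum_(m <- msupp v) (v@_m * (m j)%:R) *: << divcm m (ucm j) >>.

(* the Heisenberg modes h_i(k), k : int, acting on M(1,0) with
   [h_i(m), h_j(n)] = m delta_ij delta_(m+n,0) and h_i(0) = 0 *)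
Definition hmode (i : 'I_l) (k : int) (v : Fock) : Fock :=
  match k with
  | Posz 0 => 0
  | Posz n.+1 => n.+1%:R *: xder (i, n) v
  | Negz n => xmul (i, n) v
  end.

(* modes w_p of the vertex operator Y(w,z) = sum_p w_p z^(-p-1) of the
   monomial vector w = h_(i1)(-n1-1) ... h_(ir)(-nr-1) 1 given by the
   list [:: (i1,n1); ...; (ir,nr)], via the normal ordered product
   (h(-n-1)w)_p = sum_(k<0) binom(-k-1,n) h(k) w_(p-k-n-1)
                + sum_(k>=0) binom(-k-1,n) w_(p-k-n-1) h(k);
   the (finitely many nonzero) terms are summed over ranges that are
   large enough by weight considerations. *)
Fixpoint ymodeL (s : seq Var) (p : int) (v : Fock) : Fock :=
  match s with
  | [::] => if p == -1 then v else 0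
  | (i, n) :: s' =>
      \sum_(K < `|Posz (wtl s' + wtmax v + n) - p|%N.+1)
         'C(K, n)%:R *: hmode i (Negz K) (ymodeL s' (p + K%:Z - n%:Z) v)
    + \sum_(k < (wtmax v).+1)
         ((-1) ^+ n * 'C(k + n, n)%:R) *:
            ymodeL s' (p - k%:Z - n%:Z - 1) (hmode i k%:Z v)
  end.

Definition ymode (m : Mon) (p : int) (v : Fock) : Fock := ymodeL (vars m) p v.

Definition Ymode (u : Fock) (p : int) (v : Fock) : Fock :=
  \sum_(m <- msupp u) u@_m *: ymode m p v.

Definition homog (u : Fock) (d : nat) : Prop :=
  forall m, m \in msupp u -> wtm m = d.

(* Zhu's products for a monomial u (homogeneous of weight wtm u),
   extended bilinearly *)
Definition starm (m : Mon) (v : Fock) : Fock :=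
  \sum_(i < (wtm m).+1) 'C(wtm m, i)%:R *: ymode m (i%:Z - 1) v.
Definition circm (m : Mon) (v : Fock) : Fock :=
  \sum_(i < (wtm m).+1) 'C(wtm m, i)%:R *: ymode m (i%:Z - 2) v.
Definition zstar (u v : Fock) : Fock := \sum_(m <- msupp u) u@_m *: starm m v.
Definition zcirc (u v : Fock) : Fock := \sum_(m <- msupp u) u@_m *: circm m v.

(* the automorphism theta induced by h |-> -h, and H^+ its fixed points *)
Definition theta (v : Fock) : Fock :=
  \sum_(m <- msupp v) ((-1) ^+ mdeg m * v@_m) *: << m >>.
Definition Hplus (v : Fock) : Prop := theta v = v.

Definition OHplus (x : Fock) : Prop :=
  exists s : seq (Fock * Fock),
    (forall uv, uv \in s ->
       [/\ Hplus uv.1, exists d, homog uv.1 d & Hplus uv.2])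
    /\ x = \sum_(uv <- s) zcirc uv.1 uv.2.

(* S_xy(1,m) = h_x(-1) h_y(-m) 1  (m >= 1) *)
Definition Sv (x y : 'I_l) (m : nat) : Fock :=
  << mulcm (ucm ((x, 0%N) : Var)) (ucm ((y, m.-1) : Var)) >>.
Definition Sxy (x y : 'I_l) : Fock := Sv x y 1.

Definition Eu (x y : 'I_l) : Fock :=
  5%:R *: Sv x y 2 + 25%:R *: Sv x y 3 + 36%:R *: Sv x y 4 + 16%:R *: Sv x y 5.
Definition Et (x y : 'I_l) : Fock :=
  (- 16%:R) *: (3%:R *: Sv x y 2 + 14%:R *: Sv x y 3 + 19%:R *: Sv x y 4
                + 8%:R *: Sv x y 5).
Definition Lam (x y : 'I_l) : Fock :=
  45%:R *: Sv x y 2 + 190%:R *: Sv x y 3 + 240%:R *: Sv x y 4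
  + 96%:R *: Sv x y 5.

(* representatives of elements of M_xy = span [E^u_xy],[E^u_yx],[E^t_xy],[E^t_yx] *)
Definition inM (x y : 'I_l) (v : Fock) : Prop :=
  exists c1 c2 c3 c4 : C,
    v = c1 *: Eu x y + c2 *: Eu y x + c3 *: Et x y + c4 *: Et y x.
(* representatives of elements of Mbar_xy = M_xy + C [Lambda_xy] *)
Definition inMbar (x y : 'I_l) (v : Fock) : Prop :=
  exists w (c : C), inM x y w /\ v = w + c *: Lam x y.

End Heisenberg.

(* Write [x_(i,n)] for [h_i(-n-1)]. If the modes of a monomial [u] have indices
   disjoint from those of [v], the annihilation modes of [Y(u,z)] kill [v], so
   Zhu's [u * v] and [u o v] are the products [u v] and [(L(-1)u + wt(u) u) v] in
   the polynomial algebra M(1,0). For quadratic [u], [v] on four distinct indices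
   three such relations [u o v] combine, modulo O(H^+), to
   [x_(x,p+1) x_(y,q) x_(z,r) x_(w,t) = - x_(x,p) x_(y,q) x_(z,r) x_(w,t)],
   so every such quartic monomial is congruent to
   [(-1)^(p+q+r+t) h_x(-1)h_y(-1)h_z(-1)h_w(-1)1]. Consequently
   [(sum_k a_k S_xy(1,k+1)) * (sum_k b_k S_zw(1,k+1))] is congruent to
   [(sum_k (-1)^k a_k) (sum_k (-1)^k b_k) h_x(-1)h_y(-1)h_z(-1)h_w(-1)1], and these
   alternating sums are 0 for E^u and E^t, and 1 for Lambda and S. *)

From HB Require Import structures.
From mathcomp Require Import all_boot all_order all_algebra.
From mathcomp Require Import reals Rstruct complex.
From mathcomp Require Import finmap.
From mathcomp.multinomials Require Import monalg.
From mathcomp Require Import ring zify.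
Import GRing.Theory.
Local Open Scope ring_scope.

Lemma perm_eq_pair (T : eqType) (s : seq T) x y :
  perm_eq s [:: x; y] -> s = [:: x; y] \/ s = [:: y; x].
Proof.
move=> ps; have := perm_size ps; case: s ps => [|u [|v [|]]] //= ps _.
have : u \in [:: x; y] by rewrite -(perm_mem ps) mem_head.
rewrite !inE => /orP[]/eqP eu; subst u.
  left; move: ps; rewrite perm_cons => ps.
  by have := perm_mem ps v; rewrite !inE eqxx => /esym/eqP ->.
right; have : perm_eq [:: y; v] [:: y; x].
  by apply: perm_trans ps _; rewrite (perm_catC [:: x] [:: y]).
rewrite perm_cons => ps'.
by have := perm_mem ps' v; rewrite !inE eqxx => /esym/eqP ->.
Qed.

Lemma sum_ord_window (V : zmodType) (N n j : nat) (G : nat -> V) :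
  (n + j <= N)%N -> (forall k, ~~ (n <= k <= n + j)%N -> G k = 0) ->
  \sum_(k < N.+1) G k = \sum_(r < j.+1) G (n + r)%N.
Proof.
move=> le_njN out; rewrite -(big_mkord xpredT G) (@big_cat_nat _ _ _ n) /=; [|lia|lia].
rewrite big1_seq ?add0r => [|k]; last first.
  by rewrite mem_index_iota => lt_kn; apply: out; lia.
rewrite (@big_cat_nat _ _ _ (n + j).+1) /=; [|lia|lia].
rewrite [X in _ + X]big1_seq ?addr0 => [|k]; last first.
  by rewrite mem_index_iota => lt_njk; apply: out; lia.
rewrite -{1}(add0n n) big_addn big_mkord (_ : (n + j).+1 - n = j.+1)%N; last lia.
by apply: eq_bigr => r _; rewrite addnC.
Qed.

Section Heisenberg.
Context {l : nat}.
Implicit Types (I J : pred 'I_l) (x y z w : 'I_l) (u v : Fock l) (m : Mon l)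
  (s : seq (Var l)).

Definition xvar (i : 'I_l) (n : nat) : Fock l := << ucm ((i, n) : Var l) >>.

(* [ring] compares atoms up to conversion, and deciding that two distinct
   monomials differ by unfolding them is prohibitively slow: abstract them. *)
Ltac ring_xvar :=
  repeat match goal with |- context [xvar ?i ?n] => move: (xvar i n) => ? end; ring.

Lemma malgU_mulcm m1 m2 : << mulcm m1 m2 >> = << m1 >> * << m2 >> :> Fock l.
Proof. by rewrite malgM_def fgmulUU mulr1. Qed.

Lemma malgUZ (c : C) m : << c *g m >> = c *: << m >> :> Fock l.
Proof.
apply/malgP => k; rewrite mcoeffZ [X in _ = _ * X]mcoeffU [X in X = _]mcoeffU.
by case: eqP; rewrite ?mulr1 ?mulr0.
Qed.

Lemma count_vars m (j : Var l) : count_mem j (vars m) = m j.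
Proof.
rewrite /vars count_flatten -map_comp.
rewrite (eq_map (g := fun k => (k == j) * m k)%N); last by move=> k /=; rewrite count_nseq.
rewrite sumnE big_map.
have [j_in|j_out] := boolP (j \in finsupp (cmonom_val m)).
  rewrite (big_fsetD1 j) //= eqxx mul1n big1_fset ?addn0 // => k.
  by rewrite in_fsetD1 => /andP[/negbTE -> _] _; rewrite mul0n.
rewrite big1_fset ?(fsfun_dflt j_out) // => k k_in _.
by case: eqP => [ekj|]; [rewrite -ekj k_in in j_out|rewrite mul0n].
Qed.

Definition cmprod s : Mon l := \big[@mulcm _/@onecm _]_(j <- s) ucm j.

Lemma cmprodE s (j : Var l) : cmprod s j = count_mem j s.
Proof.
elim: s => [|k s IH]; first by rewrite /cmprod big_nil onecmE.
by rewrite /cmprod big_cons mulcmE -/(cmprod s) IH ucmE.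
Qed.

Lemma cmprod_vars m : cmprod (vars m) = m.
Proof. by apply/eqP/cmP => j; rewrite cmprodE count_vars. Qed.

Lemma vars_quad (j k : Var l) :
  vars (mulcm (ucm j) (ucm k)) = [:: j; k] \/ vars (mulcm (ucm j) (ucm k)) = [:: k; j].
Proof.
apply: perm_eq_pair; apply/allP => i _ /=.
by rewrite count_vars mulcmE !ucmE addn0.
Qed.

Lemma all_vars_quad I (j k : Var l) : I j.1 -> I k.1 ->
  all (fun i : Var l => I i.1) (vars (mulcm (ucm j) (ucm k))).
Proof. by move=> Ij Ik; case: (vars_quad j k) => ->; rewrite /= Ij Ik. Qed.

Lemma wtm_quad (j k : Var l) : wtm (mulcm (ucm j) (ucm k)) = (j.2.+1 + k.2.+1)%N.
Proof. by rewrite /wtm; case: (vars_quad j k) => ->; rewrite /wtl /= addn0 // addnC. Qed.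

(* [vac_coef s j] is [u_(-j-1) 1] for the monomial [u] with variable list [s],
   i.e. the coefficient of [z^j] in [Y(u,z)1 = exp(z L(-1)) u]. *)
Fixpoint vac_coef s (j : nat) : Fock l :=
  match s with
  | [::] => (j == 0)%N%:R
  | (i, n) :: s' =>
      \sum_(r < j.+1) 'C(n + r, n)%:R *: (xvar i (n + r) * vac_coef s' (j - r))
  end.

Lemma vac_coef_cons0 i n s : vac_coef ((i, n) :: s) 0 = xvar i n * vac_coef s 0.
Proof. by cbn [vac_coef]; rewrite big_ord1 addn0 subn0 binn scale1r. Qed.

Lemma vac_coef_cons1 i n s :
  vac_coef ((i, n) :: s) 1 = xvar i n * vac_coef s 1 + xvar i n.+1 * vac_coef s 0 *+ n.+1.
Proof.
cbn [vac_coef]; rewrite big_ord_recl big_ord1; cbn [nat_of_ord lift bump ord0].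
by rewrite !addn0 !subn0 subnn binn addn1 binSn scale1r scaler_nat.
Qed.

Lemma vac_coef_vars0 m : vac_coef (vars m) 0 = << m >>.
Proof.
rewrite -{2}(cmprod_vars m); elim: (vars m) => [|[i n] s IH].
  by rewrite /cmprod big_nil; apply/esym/mpolyC1E.
by rewrite vac_coef_cons0 IH /cmprod big_cons malgU_mulcm.
Qed.

Lemma vac_coef_quad1 x y p q :
  vac_coef (vars (mulcm (ucm (x, p)) (ucm (y, q)))) 1 =
    xvar x p * xvar y q.+1 *+ q.+1 + xvar x p.+1 * xvar y q *+ p.+1.
Proof.
have nil1 : vac_coef [::] 1 = 0 by [].
have nil0 : vac_coef [::] 0 = 1 by [].
by case: (vars_quad (x, p) (y, q)) => ->;
  rewrite vac_coef_cons1 vac_coef_cons1 vac_coef_cons0 nil1 nil0; ring_xvar.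
Qed.

Definition modes_in I v :=
  forall m, m \in msupp v -> all (fun j : Var l => I j.1) (vars m).

Lemma modes_in0 I : modes_in I 0.
Proof. by move=> m; rewrite msupp0 in_fset0. Qed.

Lemma modes_inD I u v : modes_in I u -> modes_in I v -> modes_in I (u + v).
Proof. by move=> Iu Iv m /(fsubsetP (msuppD_le u v)); rewrite in_fsetU => /orP[/Iu|/Iv]. Qed.

Lemma modes_inZ I c v : modes_in I v -> modes_in I (c *: v).
Proof. by move=> Iv m /(fsubsetP (msuppZ_le c v)) /Iv. Qed.

Lemma modes_in_quad I (j k : Var l) : I j.1 -> I k.1 ->
  modes_in I << mulcm (ucm j) (ucm k) >>.
Proof. by move=> Ij Ik m; rewrite msuppU1 in_fset1 => /eqP ->; apply: all_vars_quad. Qed.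

Lemma modes_in_coef I v m (j : Var l) : modes_in I v -> m \in msupp v -> ~~ I j.1 -> m j = 0%N.
Proof.
move=> Iv /Iv /allP Im Ij; rewrite -count_vars; apply/count_memPn.
by apply: contra Ij => /Im.
Qed.

Lemma hmode_pos_eq0 {J i} (k : nat) {v} : ~~ J i -> modes_in J v -> hmode i k v = 0.
Proof.
move=> Ji Jv; case: k => [|n] //=.
rewrite /xder big1_seq ?scaler0 // => m /andP[_ vm].
by rewrite (@modes_in_coef J v m (i, n) Jv vm Ji) mulr0 scale0r.
Qed.

Local Arguments hmode : simpl never.

(* The annihilation modes kill [v], so only the creation part [exp(z L(-1)) u]
   of [Y(u,z)] acts. *)
Lemma ymodeL_disjoint {J s} p {v} : all (fun j : Var l => ~~ J j.1) s -> modes_in J v ->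
  ymodeL s p v = if p is Negz j then vac_coef s j * v else 0.
Proof.
elim: s p v => [|[i n] s IH] p v.
  by move=> _ _; case: p => [p|[|j]] //=; rewrite ?mul1r ?mul0r.
case/andP => /= Ji Js Jv; cbn [ymodeL vac_coef].
have Y0 q : ymodeL s q 0 = 0 by rewrite (IH q 0 Js (modes_in0 J)); case: q => q; rewrite ?mulr0.
rewrite [X in _ + X]big1 ?addr0 => [|k _]; last by rewrite (hmode_pos_eq0 _ Ji Jv) Y0 scaler0.
case: p => [p|j].
  rewrite big1 // => K _; have [lt_Kn|le_nK] := ltnP K n; first by rewrite bin_small // scale0r.
  have -> : (Posz p + (K : nat)%:Z - n%:Z = (p + K - n)%N%:Z)%R by lia.
  by rewrite IH // /hmode /xmul mulr0 scaler0.
pose G K := 'C(K, n)%:R *: hmode i (Negz K) (ymodeL s (Negz j + K%:Z - n%:Z) v).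
rewrite (@sum_ord_window _ _ n j G); first last.
- move=> K K_out; rewrite /G.
  have [lt_Kn|le_nK] := ltnP K n; first by rewrite bin_small // scale0r.
  have -> : (Negz j + K%:Z - n%:Z = (K - n - j.+1)%N%:Z)%R by move: K_out; lia.
  by rewrite IH // /hmode /xmul mulr0 scaler0.
- lia.
rewrite mulr_suml; apply: eq_bigr => r _; rewrite /G.
have -> : (Negz j + (n + r)%N%:Z - n%:Z = Negz (j - r))%R by have := ltn_ord r; lia.
by rewrite IH // /hmode /xmul -scalerAl mulrA.
Qed.

Lemma starm_disjoint {J m v} : all (fun j : Var l => ~~ J j.1) (vars m) -> modes_in J v ->
  starm m v = << m >> * v.
Proof.
move=> Jm Jv; pose G i := 'C(wtm m, i)%:R *: ymode m (i%:Z - 1) v.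
rewrite /starm (@sum_ord_window _ _ 0 0 G) // => [|i i_gt0].
  by rewrite big_ord1 /G bin0 scale1r /ymode (ymodeL_disjoint (Negz 0) Jm Jv) vac_coef_vars0.
rewrite /G; have -> : (i%:Z - 1 = (i.-1)%:Z)%R by move: i_gt0; lia.
by rewrite /ymode (ymodeL_disjoint _ Jm Jv) scaler0.
Qed.

Lemma circm_disjoint {J m v} : all (fun j : Var l => ~~ J j.1) (vars m) -> modes_in J v ->
  (0 < wtm m)%N -> circm m v = (vac_coef (vars m) 1 + << m >> *+ wtm m) * v.
Proof.
move=> Jm Jv wt_gt0; pose G i := 'C(wtm m, i)%:R *: ymode m (i%:Z - 2) v.
rewrite /circm (@sum_ord_window _ _ 0 1 G) // => [|i i_gt1].
  rewrite big_ord_recl big_ord1 /G /= bin0 bin1 scale1r /ymode.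
  rewrite (ymodeL_disjoint (Negz 1) Jm Jv) (ymodeL_disjoint (Negz 0) Jm Jv) vac_coef_vars0.
  by rewrite scaler_nat mulrDl -mulrnAl.
rewrite /G; have -> : (i%:Z - 2 = (i.-2)%:Z)%R by move: i_gt1; lia.
by rewrite /ymode (ymodeL_disjoint _ Jm Jv) scaler0.
Qed.

Lemma zstar_disjoint {I J u v} : (forall i, I i -> ~~ J i) ->
  modes_in I u -> modes_in J v -> zstar u v = u * v.
Proof.
move=> IJ Iu Jv; rewrite {2}(monalgE u) mulr_suml; apply: eq_big_seq => m /Iu Im.
by rewrite (starm_disjoint (sub_all (fun j => IJ j.1) Im) Jv) malgUZ scalerAl.
Qed.

Definition mext (G : Mon l -> Fock l) u : Fock l := \sum_(m <- msupp u) u@_m *: G m.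

Lemma mextZ G c u : mext G (c *: u) = c *: mext G u.
Proof.
rewrite /mext (big_fset_incl _ (msuppZ_le c u)) => [|m _ /mcoeff_outdom->]; last first.
  by rewrite scale0r.
by rewrite scaler_sumr; apply: eq_bigr => m _; rewrite mcoeffZ scalerA.
Qed.

Lemma mextU G m : mext G << m >> = G m.
Proof. by rewrite /mext msuppU1 big_seq_fset1 mcoeffUU scale1r. Qed.

Lemma theta_mext v : theta v = mext (fun m => (-1) ^+ mdeg m *: << m >>) v.
Proof. by apply: eq_bigr => m _; rewrite scalerA mulrC. Qed.

Lemma HplusZ c v : Hplus v -> Hplus (c *: v).
Proof. by rewrite /Hplus !theta_mext mextZ => ->. Qed.

Lemma Hplus_even m : ~~ odd (mdeg m) -> Hplus << m >>.
Proof. by move=> ev; rewrite /Hplus theta_mext mextU -signr_odd (negbTE ev) scale1r. Qed.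

Lemma Hplus_quad (j k : Var l) : Hplus << mulcm (ucm j) (ucm k) >>.
Proof. by apply: Hplus_even; rewrite mdegM !mdegU. Qed.

Lemma OHplus0 : OHplus (0 : Fock l).
Proof. by exists [::]; split => [uv|]; rewrite ?big_nil. Qed.

Lemma OHplusD {u v} : OHplus u -> OHplus v -> OHplus (u + v).
Proof.
move=> [s [Hs ->]] [t [Ht ->]]; exists (s ++ t); rewrite big_cat; split => // uv.
by rewrite mem_cat => /orP[/Hs|/Ht].
Qed.

Lemma OHplusZ c {v} : OHplus v -> OHplus (c *: v).
Proof.
move=> [s [Hs ->]]; exists [seq (c *: uv.1, uv.2) | uv <- s]; split.
  move=> _ /mapP[[u w] /Hs[Hu [d Hd] Hw] ->] /=; split => //; first exact: HplusZ.
  by exists d => m /(fsubsetP (msuppZ_le c u)) /Hd.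
rewrite big_map scaler_sumr; apply: eq_bigr => -[u w] _.
exact/esym/(mextZ (fun m => circm m w)).
Qed.

Lemma OHplusB {u v} : OHplus u -> OHplus v -> OHplus (u - v).
Proof. by move=> Ou Ov; rewrite -scaleN1r; apply/OHplusD/OHplusZ. Qed.

Lemma OHplus_sum (T : Type) (r : seq T) (P : pred T) (F : T -> Fock l) :
  (forall i, P i -> OHplus (F i)) -> OHplus (\sum_(i <- r | P i) F i).
Proof. exact: (big_ind _ OHplus0 (@OHplusD)). Qed.

Lemma circ_disjointO {J m v} : all (fun j : Var l => ~~ J j.1) (vars m) -> modes_in J v ->
  ~~ odd (mdeg m) -> Hplus v -> (0 < wtm m)%N ->
  OHplus ((vac_coef (vars m) 1 + << m >> *+ wtm m) * v).
Proof.
move=> Jm Jv ev Hv wt_gt0; exists [:: (<< m >>, v)]; split.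
  move=> uv; rewrite inE => /eqP ->; split; [exact: Hplus_even| |exact: Hv].
  by exists (wtm m) => m'; rewrite msuppU1 in_fset1 => /eqP ->.
by rewrite big_seq1 /zcirc msuppU1 big_seq_fset1 mcoeffUU scale1r (circm_disjoint Jm Jv wt_gt0).
Qed.

(* [u o v = (L(-1)u + wt(u) u) v] for [u = h_x(-p-1)h_y(-q-1)1] and
   [v = h_z(-r-1)h_w(-t-1)1]. *)
Lemma quad_circO {x y z w} (p q r t : nat) : x != z -> x != w -> y != z -> y != w ->
  OHplus ((xvar x p * xvar y q.+1 *+ q.+1 + xvar x p.+1 * xvar y q *+ p.+1
           + xvar x p * xvar y q *+ (p + q).+2) * (xvar z r * xvar w t)).
Proof.
move=> xz xw yz yw; pose J := pred2 z w.
have Jm : all (fun j : Var l => ~~ J j.1) (vars (mulcm (ucm (x, p)) (ucm (y, q)))).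
  by apply: (all_vars_quad (predC J)); rewrite /= negb_or ?xz ?xw ?yz ?yw.
have Jv : modes_in J (xvar z r * xvar w t).
  by rewrite -malgU_mulcm; apply: modes_in_quad; rewrite /= eqxx ?orbT.
have Hv : Hplus (xvar z r * xvar w t) by rewrite -malgU_mulcm; apply: Hplus_quad.
have ev : ~~ odd (mdeg (mulcm (ucm (x, p)) (ucm (y, q)))) by rewrite mdegM !mdegU.
have := circ_disjointO Jm Jv ev Hv; rewrite wtm_quad vac_coef_quad1 malgU_mulcm addSn addnS.
by apply.
Qed.

Definition quartic x y z w (p q r t : nat) : Fock l :=
  xvar x p * xvar y q * xvar z r * xvar w t.

Lemma quartic_shiftO {x y z w} (p q r t : nat) : uniq [:: x; y; z; w] ->
  OHplus (quartic x y z w p.+1 q r t + quartic x y z w p q r t).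
Proof.
rewrite /= !inE !negb_or => /and4P[/and3P[xy xz xw] /andP[yz yw] zw _].
have Oxy := quad_circO p q r t xz xw yz yw.
have [yx zx zy] : [/\ y != x, z != x & z != y] by rewrite (eq_sym y) !(eq_sym z) xy xz yz.
have Oxz := quad_circO p r q t xy xw zy zw.
have Oyz := quad_circO q r p t yx yw zx zw.
(* [Oxy + Oxz - Oyz] is [2(p+1)] times the claimed element. *)
have := OHplusZ (p.+1 * 2)%:R^-1 (OHplusB (OHplusD Oxy Oxz) Oyz).
rewrite [X in _ *: X](_ : _ = (p.+1 * 2)%:R *:
  (quartic x y z w p.+1 q r t + quartic x y z w p q r t)).
  by rewrite scalerA mulVf ?scale1r // Num.Theory.pnatr_eq0.
by rewrite scaler_nat /quartic; ring_xvar.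
Qed.

Lemma quartic_lowerO {x y z w} (p q r t : nat) : uniq [:: x; y; z; w] ->
  OHplus (quartic x y z w p q r t - (-1) ^+ p *: quartic x y z w 0 q r t).
Proof.
move=> U; elim: p => [|p IH]; first by rewrite expr0 scale1r subrr; apply: OHplus0.
have := OHplusB (quartic_shiftO p q r t U) IH.
by rewrite opprB addrA addrAC addrK exprS mulN1r scaleNr opprK.
Qed.

Lemma quartic_rot x y z w (p q r t : nat) :
  quartic x y z w p q r t = quartic y z w x q r t p.
Proof. by rewrite /quartic; ring_xvar. Qed.

Lemma OHplus_transZ c d u v v' : OHplus (u - c *: v) -> OHplus (v - d *: v') ->
  OHplus (u - (c * d) *: v').
Proof.
move=> Ouv Ovv'; have := OHplusD Ouv (OHplusZ c Ovv').
by rewrite scalerBr scalerA addrA subrK.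
Qed.

Lemma quartic_reduceO {x y z w} (p q r t : nat) : uniq [:: x; y; z; w] ->
  OHplus (quartic x y z w p q r t - (-1) ^+ (p + q + r + t) *: quartic x y z w 0 0 0 0).
Proof.
move=> U; have U1 : uniq [:: y; z; w; x] by rewrite -(rot_uniq 1) in U.
have U2 : uniq [:: z; w; x; y] by rewrite -(rot_uniq 1) in U1.
have U3 : uniq [:: w; x; y; z] by rewrite -(rot_uniq 1) in U2.
rewrite !exprD -!mulrA.
apply: OHplus_transZ (quartic_lowerO p q r t U) _; rewrite quartic_rot.
apply: OHplus_transZ (quartic_lowerO q r t 0 U1) _; rewrite quartic_rot.
apply: OHplus_transZ (quartic_lowerO r t 0 0 U2) _; rewrite quartic_rot.
by rewrite -(quartic_rot w); apply: quartic_lowerO.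
Qed.

Definition Ssum x y (al : seq C) : Fock l := \sum_(k < size al) al`_k *: Sv x y k.+1.

Definition alt_sum (al : seq C) : C := \sum_(k < size al) (-1) ^+ k * al`_k.

Lemma Sv_xvar x y k : Sv x y k.+1 = xvar x 0 * xvar y k.
Proof. exact: malgU_mulcm. Qed.

Lemma Ssum_mulO {x y z w} al be : uniq [:: x; y; z; w] ->
  OHplus (Ssum x y al * Ssum z w be - (alt_sum al * alt_sum be) *: quartic x y z w 0 0 0 0).
Proof.
move=> U; rewrite /Ssum /alt_sum mulr_suml mulr_suml scaler_suml -sumrB.
apply: OHplus_sum => i _; rewrite mulr_sumr mulr_sumr scaler_suml -sumrB.
apply: OHplus_sum => j _.
rewrite -scalerAl -scalerAr scalerA !Sv_xvar mulrA -/(quartic x y z w 0 i 0 j).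
have -> : (-1) ^+ i * al`_i * ((-1) ^+ j * be`_j) = al`_i * be`_j * (-1) ^+ (0 + i + 0 + j).
  by rewrite add0n addn0 exprD; ring.
by rewrite -(scalerA (al`_i * be`_j)) -scalerBr; apply: OHplusZ; apply: quartic_reduceO.
Qed.

Lemma Eu_Ssum x y : Eu x y = Ssum x y [:: 0; 5; 25; 36; 16].
Proof. by rewrite /Ssum 4!big_ord_recl big_ord1 !lift0 /= scale0r add0r !addrA. Qed.

Lemma Et_Ssum x y : Et x y = - 16 *: Ssum x y [:: 0; 3; 14; 19; 8].
Proof. by rewrite /Ssum 4!big_ord_recl big_ord1 !lift0 /= scale0r add0r !addrA. Qed.

Lemma Lam_Ssum x y : Lam x y = Ssum x y [:: 0; 45; 190; 240; 96].
Proof. by rewrite /Ssum 4!big_ord_recl big_ord1 !lift0 /= scale0r add0r !addrA. Qed.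

Lemma Sxy_Ssum x y : Sxy x y = Ssum x y [:: 1].
Proof. by rewrite /Ssum big_ord1 scale1r. Qed.

Lemma alt_sum_Eu : alt_sum [:: 0; 5; 25; 36; 16] = 0.
Proof. by rewrite /alt_sum 4!big_ord_recl big_ord1 !lift0 /=; ring. Qed.

Lemma alt_sum_Et : alt_sum [:: 0; 3; 14; 19; 8] = 0.
Proof. by rewrite /alt_sum 4!big_ord_recl big_ord1 !lift0 /=; ring. Qed.

Lemma alt_sum_Lam : alt_sum [:: 0; 45; 190; 240; 96] = 1.
Proof. by rewrite /alt_sum 4!big_ord_recl big_ord1 !lift0 /=; ring. Qed.

Lemma alt_sum_Sxy : alt_sum [:: 1] = 1.
Proof. by rewrite /alt_sum big_ord1 mul1r. Qed.

Lemma OHplus_mulDl {u1 u2 v} : OHplus (u1 * v) -> OHplus (u2 * v) -> OHplus ((u1 + u2) * v).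
Proof. by rewrite mulrDl; apply: OHplusD. Qed.

Lemma OHplus_mulZl c {u v} : OHplus (u * v) -> OHplus (c *: u * v).
Proof. by rewrite -scalerAl; apply: OHplusZ. Qed.

Lemma OHplus_mulDr {u v1 v2} : OHplus (u * v1) -> OHplus (u * v2) -> OHplus (u * (v1 + v2)).
Proof. by rewrite mulrDr; apply: OHplusD. Qed.

Lemma OHplus_mulZr c {u v} : OHplus (u * v) -> OHplus (u * (c *: v)).
Proof. by rewrite -scalerAr; apply: OHplusZ. Qed.

Lemma Ssum_alt0_mulO {x y z w} al be : uniq [:: x; y; z; w] -> alt_sum al = 0 ->
  OHplus (Ssum x y al * Ssum z w be).
Proof. by move=> U al0; have := Ssum_mulO al be U; rewrite al0 mul0r scale0r subr0. Qed.

Lemma modes_in_Ssum I x y al : I x -> I y -> modes_in I (Ssum x y al).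
Proof.
move=> Ix Iy; apply: (big_ind _ (modes_in0 I) (@modes_inD I)) => k _.
by apply/modes_inZ/modes_in_quad.
Qed.

Lemma modes_in_Mbar {I x y v} : I x -> I y -> inMbar x y v -> modes_in I v.
Proof.
move=> Ix Iy [w [e [[c1 [c2 [c3 [c4 ->]]]] ->]]].
rewrite !Eu_Ssum !Et_Ssum Lam_Ssum.
by do !apply: modes_inD; do !apply: modes_inZ; apply: modes_in_Ssum.
Qed.

Lemma modes_in_M {I x y v} : I x -> I y -> inM x y v -> modes_in I v.
Proof.
by move=> Ix Iy Mv; apply: (modes_in_Mbar Ix Iy); exists v, 0; rewrite scale0r addr0.
Qed.

Lemma M_Mbar_mulO {a b c d u v} : uniq [:: a; b; c; d] -> inM a b u -> inMbar c d v ->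
  OHplus (u * v).
Proof.
move=> U [c1 [c2 [c3 [c4 ->]]]] [w [e [[d1 [d2 [d3 [d4 ->]]]] ->]]].
have [Uba Uabdc Ubadc] : [/\ uniq [:: b; a; c; d], uniq [:: a; b; d; c] & uniq [:: b; a; d; c]].
  by split; rewrite (perm_uniq (_ : perm_eq _ [:: a; b; c; d])) //; apply/permP => P /=; lia.
rewrite !Eu_Ssum !Et_Ssum Lam_Ssum.
do ![apply: OHplus_mulDl | apply: OHplus_mulZl];
  do ![apply: OHplus_mulDr | apply: OHplus_mulZr];
  apply: Ssum_alt0_mulO; rewrite ?alt_sum_Eu ?alt_sum_Et //.
Qed.

End Heisenberg.

Theorem lemma5p3 (l : nat) (a b c d : 'I_l) :
  uniq [:: a; b; c; d] ->
  (forall x y : Fock l, inM a b x -> inMbar c d y ->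
      OHplus (zstar x y) /\ OHplus (zstar y x))
  /\ OHplus (zstar (Lam a b) (Lam c d) - zstar (Sxy a b) (Sxy c d)).
Proof.
move=> U; set I := pred2 a b; set J := pred2 c d.
have [IJ JI] : (forall i, I i -> ~~ J i) /\ (forall i, J i -> ~~ I i).
  move: U; rewrite /= !inE !negb_or => /and4P[/and3P[_ ac ad] /andP[bc bd] _ _].
  by split=> i /orP[]/eqP-> /=; rewrite negb_or -?(eq_sym a) -?(eq_sym b) ?ac ?ad ?bc ?bd.
have [Ia Ib Jc Jd] : [/\ I a, I b, J c & J d] by rewrite /I /J /= !eqxx !orbT.
split=> [x y Mx My|].
  have [Ix Jy] := (modes_in_M Ia Ib Mx, modes_in_Mbar Jc Jd My).
  rewrite (zstar_disjoint IJ Ix Jy) (zstar_disjoint JI Jy Ix) (mulrC y x).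
  by split; exact: M_Mbar_mulO U Mx My.
rewrite !(zstar_disjoint IJ) ?Lam_Ssum ?Sxy_Ssum; try exact: modes_in_Ssum.
have := OHplusB (Ssum_mulO [:: 0; 45; 190; 240; 96] [:: 0; 45; 190; 240; 96] U)
                (Ssum_mulO [:: 1] [:: 1] U).
by rewrite alt_sum_Lam alt_sum_Sxy opprB addrA subrK.
Qed.
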